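(* Consider Setting B and suppose the sequence of communication graphs $\{\mathcal G[k]\}_{k\ge0}$ is jointly strongly $(3f+1)$-robust w.r.t. the source set $\mathcal S$. Then for any desired rate $\rho\in(0,1)$, the regular source nodes can choose observer gains $l_i$ such that, when the regular nodes run Algorithm 2, for every $f$-total Byzantine adversarial set $\mathcal A$ and every adversarial behavior, and for every initial state and initial estimates, there exist constants $c\ge0$ and $K\in\mathbb N$ with $|\hat x_i[k]-x[k]|\le c\rho^k$ for all $k\ge K$ and all $i\in\mathcal R$.
   Context: Setting B. Scalar system $x[k+1]=ax[k]$, $a\in\mathbb R$, monitored by nodes $\mathcal V=\{1,\dots,N\}$ with measurements $y_i[k]=c_ix[k]$, $c_i\in\mathbb R$. Source set $\mathcal S=\{i\in\mathcal V:c_i\neq0\}$. Time-varying directed graphs $\mathcal G[k]=(\mathcal V,\mathcal E[k])$, $\mathcal N_i[k]=\{l\ne i:(l,i)\in\mathcal E[k]\}$; the union graph over an interval has the union of the edge sets. An unknown set $\mathcal A\subseteq\mathcal V$ of adversarial nodes with $|\mathcal A|\le f$ ($f$-total model; $\mathcal A$ may intersect $\mathcal S$); $\mathcal R=\mathcal V\setminus\mathcal A$ are regular. Adversaries are Byzantine: at each time they may send arbitrary, possibly different values (of both estimate and freshness index) to different out-neighbors, or send nothing, and may collude. At each time $k$, each node $l$ sends to its out-neighbors a pair (estimate, freshness index); regular $l$ sends its true $(\hat x_l[k],\tau_l[k])$. Algorithm 2 (executed by regular nodes). Regular source $i\in\mathcal S$: $\tau_i[k]=0$ for all $k$ and $\hat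 x_i[k+1]=a\hat x_i[k]+l_i(y_i[k]-c_i\hat x_i[k])$ with observer gain $l_i$. Regular non-source $i$: keeps $\hat x_i[k]$ (arbitrary initial), $\tau_i[k]\in\mathbb N\cup\{\omega\}$ with $\tau_i[0]=\omega$, and a list $\mathcal M_i$ of distinct node labels (initially empty, at most $2f+1$ entries, stored in $2f+1$ slots) with, for each $l\in\mathcal M_i$, a stored estimate $v_{i,l}$, stored index $d_{i,l}\in\mathbb N$ and time stamp $\phi_{i,l}$. At time $k$ let $\mathcal J_i[k]$ be the set of $l\in\mathcal N_i[k]$ whose reported index $\tau_l[k]$ lies in $\mathbb N$ and satisfies $\tau_l[k]\le k$. ''Appending $l$ at time $k$'' means: put $l$ in $\mathcal M_i$ (if absent), set $v_{i,l}=\hat x_l[k]$, $d_{i,l}=\tau_l[k]$ (reported values), $\phi_{i,l}=k$. Filtering update (F) at time $k$ (requires $|\mathcal M_i|=2f+1$): set $\tau_i[k+1]=\max_{l\in\mathcal M_i}d_{i,l}+1$; form $\bar x_{i,l}[k]=a^{k-\phi_{i,l}}v_{i,l}$ for $l\in\mathcal M_i$; discard the $f$ largest and $f$ smallest of these $2f+1$ values, call the remaining one $\bar x_i[k]$, and set $\hat x_i[k+1]=a\bar x_i[k]$. Case $\tau_i[k]=\omega$: let $\mathcal J'=\mathcal J_i[k]\setminus\mathcal M_i$. If $|\mathcal M_i|+|\mathcal J'|<2f+1$, append every $l\in\mathcal J'$, set $\tau_i[k+1]=\omega$ and $\hat x_i[k+1]=a\hat x_i[k]$. Otherwise append the $2f+1-|\mathcal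 M_i|$ nodes of $\mathcal J'$ with smallest reported indices (ties broken arbitrarily) and perform (F). Case $\tau_i[k]\ne\omega$: for each $l\in\mathcal J_i[k]\cap\mathcal M_i$ with reported $\tau_l[k]<d_{i,l}$, append $l$ (refreshing its entries); then rank the nodes of $\mathcal M_i\cup(\mathcal J_i[k]\setminus\mathcal M_i)$ by index ($d_{i,l}$ for $l\in\mathcal M_i$, reported $\tau_l[k]$ otherwise), keep the $2f+1$ with smallest index (ties arbitrary), appending newcomers and deleting dropped nodes (a retained node keeps its storage slot; a newcomer occupies the slot of a dropped node), and perform (F). In all cases, after the step every stored $d_{i,l}$ is incremented by $1$, and $\mathcal M_i$, $v$, $\phi$ carry over to time $k+1$. Definitions. For a graph $\mathcal G=(\mathcal V,\mathcal E)$ with in-neighbor sets $\mathcal N_i$ and $r\in\mathbb N_+$, a set $\mathcal C\subseteq\mathcal V$ is $r$-reachable if some $i\in\mathcal C$ has $|\mathcal N_i\setminus\mathcal C|\ge r$. $\mathcal G$ is strongly $r$-robust w.r.t. $\mathcal S\subset\mathcal V$ if every nonempty $\mathcal C\subseteq\mathcal V\setminus\mathcal S$ is $r$-reachable. A sequence $\{\mathcal G[k]\}$ is jointly strongly $r$-robust w.r.t. $\mathcal S$ if there is $T\in\mathbb N_+$ such that the union graph over $[kT,(k+1)T-1]$ is strongly $r$-robust w.r.t. $\mathcal S$ for every $k\in\mathbb N$. *)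

From Stdlib Require Import Reals.
From mathcomp Require Import all_boot.
Set Implicit Arguments. Unset Strict Implicit. Unset Printing Implicit Defensive.

(* A stored entry of the list M_i: (v_{i,l}, d_{i,l}, phi_{i,l}). *)
Definition entry := (R * nat * nat)%type.
(* The list M_i, indexed by node label: None = label not in M_i. *)
Definition memory (N : nat) := 'I_N -> option entry.
(* A message: None = nothing sent; Some (estimate, index), index None = omega. *)
Definition msg := option (R * option nat).

Definition dom N (m : memory N) : {set 'I_N} := [set l | isSome (m l)].
Definition dval N (m : memory N) (l : 'I_N) : nat :=
  match m l with Some (_, d, _) => d | None => 0 end.

(* In-neighbours N_i[k] = {l <> i : (l,i) in E[k]}; E k l i means edge l -> i. *)
Definition nbrs N (E : nat -> rel 'I_N) (k : nat) (i : 'I_N) : {set 'I_N} :=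
  [set l | (l != i) && E k l i].

(* Reported (estimate, index) of l, restricted to J_i[k]:
   l in N_i[k], reported index in N and <= k. *)
Definition reported N (k : nat) (Nin : {set 'I_N}) (rcv : 'I_N -> msg) (l : 'I_N)
  : option (R * nat) :=
  if l \in Nin then
    match rcv l with
    | Some (x, Some t) => if t <= k then Some (x, t) else None
    | _ => None
    end
  else None.

Definition append N (m : memory N) (P : {set 'I_N}) (rep : 'I_N -> option (R * nat))
  (k : nat) : memory N :=
  fun l => if l \in P then
             match rep l with Some (x, t) => Some (x, t, k) | None => m l end
           else m l.

Definition restrict N (m : memory N) (K : {set 'I_N}) : memory N :=
  fun l => if l \in K then m l else None.

Definition incr N (m : memory N) : memory N :=
  fun l => match m l with Some (v, d, phi) => Some (v, d.+1, phi) | None => None end.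

Definition Rleb (x y : R) : bool := if Rle_dec x y then true else false.

Definition vals N (a : R) (k : nat) (m : memory N) : seq R :=
  pmap (fun l => match m l with
                 | Some (v, _, phi) => Some (Rmult (pow a (k - phi)) v)
                 | None => None end) (enum 'I_N).

(* Discard the f largest and f smallest of the 2f+1 values: remaining one. *)
Definition trimmed (f : nat) (s : seq R) : R := nth R0 (sort Rleb s) f.

Definition maxd N (m : memory N) : nat := \max_(l in dom m) dval m l.

Definition Fupd N (f : nat) (a : R) (k : nat) (m2 : memory N)
  (xh' : R) (tau' : option nat) (m' : memory N) : Prop :=
  #|dom m2| = (2 * f).+1 /\
  tau' = Some (maxd m2).+1 /\
  xh' = Rmult a (trimmed f (vals a k m2)) /\
  m' =1 incr m2.

(* One step of Algorithm 2 at a regular non-source node at time k.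
   Nin = N_i[k], rcv l = message received from l.  Ties are arbitrary:
   any admissible choice is allowed (existentials). *)
Definition nonsource_step N (f : nat) (a : R) (k : nat) (Nin : {set 'I_N})
  (rcv : 'I_N -> msg) (xh : R) (tau : option nat) (m : memory N)
  (xh' : R) (tau' : option nat) (m' : memory N) : Prop :=
  let rep := reported k Nin rcv in
  let J := [set l | isSome (rep l)] in
  let idxr l := match rep l with Some (_, t) => t | None => 0 end in
  match tau with
  | None =>
      let J' := J :\: dom m in
      if #|dom m| + #|J'| < (2 * f).+1 then
        m' =1 incr (append m J' rep k) /\ tau' = None /\ xh' = Rmult a xh
      else
        exists P : {set 'I_N},
          [/\ P \subset J', #|dom m| + #|P| = (2 * f).+1,
              (forall l l', l \in P -> l' \in J' :\: P -> idxr l <= idxr l') &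
              Fupd f a k (append m P rep k) xh' tau' m']
  | Some _ =>
      let Rf := [set l in J :&: dom m | idxr l < dval m l] in
      let m1 := append m Rf rep k in
      let C := dom m1 :|: J in
      let idx l := if l \in dom m1 then dval m1 l else idxr l in
      exists K : {set 'I_N},
        [/\ K \subset C, #|K| = (2 * f).+1,
            (forall l l', l \in K -> l' \in C :\: K -> idx l <= idx l') &
            Fupd f a k (restrict (append m1 (K :\: dom m1) rep k) K) xh' tau' m']
  end.

Definition source_set N (c : 'I_N -> R) : {set 'I_N} :=
  [set i | if Req_EM_T (c i) R0 then false else true].

Definition union_nbrs N (E : nat -> rel 'I_N) (t0 T : nat) (i : 'I_N) : {set 'I_N} :=
  [set l | (l != i) && [exists t : 'I_T, E (t0 + t) l i]].

Definition r_reachable N (Nb : 'I_N -> {set 'I_N}) (C : {set 'I_N}) (r : nat) : Prop :=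
  exists2 i, i \in C & r <= #|Nb i :\: C|.

Definition strongly_robust N (Nb : 'I_N -> {set 'I_N}) (S : {set 'I_N}) (r : nat) : Prop :=
  forall C : {set 'I_N}, C != set0 -> C \subset ~: S -> r_reachable Nb C r.

Definition jointly_strongly_robust N (E : nat -> rel 'I_N) (S : {set 'I_N}) (r : nat)
  : Prop :=
  exists2 T, 0 < T & forall k, strongly_robust (union_nbrs E (k * T) T) S r.

(* An execution of Setting B with Algorithm 2 run by the regular nodes
   (adversarial set A, adversarial messages adv k l i sent by l to i at time k). *)
Definition run N (f : nat) (a : R) (c gain : 'I_N -> R) (E : nat -> rel 'I_N)
  (A : {set 'I_N}) (adv : nat -> 'I_N -> 'I_N -> msg) (x : nat -> R)
  (xh : nat -> 'I_N -> R) (tau : nat -> 'I_N -> option nat)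
  (mem : nat -> 'I_N -> memory N) : Prop :=
  let sent k l i : msg := if l \in A then adv k l i else Some (xh k l, tau k l) in
  (forall k, x k.+1 = Rmult a (x k)) /\
  (forall i, i \notin A -> i \in source_set c -> forall k,
      tau k i = Some 0 /\
      xh k.+1 i = Rplus (Rmult a (xh k i))
                        (Rmult (gain i) (Rminus (Rmult (c i) (x k)) (Rmult (c i) (xh k i))))) /\
  (forall i, i \notin A -> i \notin source_set c ->
      tau 0 i = None /\ (forall l, mem 0 i l = None) /\
      forall k, nonsource_step f a k (nbrs E k i) (fun l => sent k l i)
                  (xh k i) (tau k i) (mem k i) (xh k.+1 i) (tau k.+1 i) (mem k.+1 i)).

(* With the deadbeat gains [l_i = a / c_i] every regular source is exact from
   time 1 on; we show that all regular estimates become exact in finite time, so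
   the bound holds with [c = 0].
   Entries that a node stores from regular senders are snapshots of those
   senders.  If a node's index is below the current time, each of its regular
   entries was sent with an index below its sending time, hence is exact by
   induction, and trimming discards the at most [f] adversarial values among the
   [2f+1].
   Strong (3f+1)-robustness of a window yields, outside any set of regular nodes
   containing the regular sources, a regular node with [2f+1] regular
   in-neighbours inside the set.  Properties passed on along such edges thus
   reach every regular node within [N] windows: first "having an index", then
   "having an index at least [N T] below the current time". *)

From Stdlib Require Import Reals Lra Lia ClassicalEpsilon.
From mathcomp Require Import all_boot zify.
Set Implicit Arguments. Unset Strict Implicit. Unset Printing Implicit Defensive.

Section Memory.
Variable N : nat.
Implicit Types (m : memory N) (l : 'I_N).

Lemma in_dom m l : (l \in dom m) = isSome (m l).
Proof. by rewrite inE. Qed.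

Lemma dom_eq m m' : m =1 m' -> dom m = dom m'.
Proof. by move=> eq_m; apply/setP => l; rewrite !in_dom eq_m. Qed.

Lemma dval_eq m m' l : m =1 m' -> dval m l = dval m' l.
Proof. by move=> eq_m; rewrite /dval eq_m. Qed.

Lemma maxd_eq m m' : m =1 m' -> maxd m = maxd m'.
Proof. by move=> eq_m; rewrite /maxd (dom_eq eq_m); apply: eq_bigr => l _; rewrite (dval_eq l eq_m). Qed.

Lemma dom_incr m : dom (incr m) = dom m.
Proof. by apply/setP => l; rewrite !in_dom /incr; case: (m l) => [[[]]|]. Qed.

Lemma dval_incr m l : l \in dom m -> dval (incr m) l = (dval m l).+1.
Proof. by rewrite in_dom /dval /incr; case: (m l) => [[[]]|]. Qed.

Lemma maxd_leq m X : (maxd m <= X) = [forall (l | l \in dom m), dval m l <= X].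
Proof. by apply/bigmax_leqP/forall_inP => H l /H. Qed.

Lemma dval_le_maxd m l : l \in dom m -> dval m l <= maxd m.
Proof. exact: leq_bigmax_cond. Qed.

Lemma maxd_incr m : 0 < #|dom m| -> maxd (incr m) = (maxd m).+1.
Proof.
move=> dom_gt0; apply/eqP; rewrite eqn_leq; apply/andP; split.
  rewrite maxd_leq; apply/forall_inP => l; rewrite dom_incr => l_in.
  by rewrite dval_incr // ltnS dval_le_maxd.
have [l0 l0_in max_l0] := eq_bigmax_cond (dval m) dom_gt0.
by rewrite {1}/maxd max_l0 -dval_incr // dval_le_maxd // dom_incr.
Qed.

Lemma maxd_le_cover m (G : {set 'I_N}) Y : #|dom m| <= #|G| ->
  (forall l, l \in G -> (l \in dom m /\ dval m l <= Y) \/ maxd m <= Y) -> maxd m <= Y.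
Proof.
move=> le_dom_G cover.
have [all_in | /forall_inPn [l l_in not_in]] :=
  boolP [forall (l | l \in G), (l \in dom m) && (dval m l <= Y)].
  have sub_G : G \subset dom m by apply/subsetP => l /(forall_inP all_in)/andP[].
  have G_dom : G = dom m by apply/eqP; rewrite eqEcard sub_G.
  by rewrite maxd_leq -G_dom; apply/forall_inP => l /(forall_inP all_in)/andP[].
by case: (cover l l_in) => // -[in_m le_Y]; rewrite in_m le_Y in not_in.
Qed.

End Memory.

Definition Reqb (x y : R) : bool := if Req_EM_T x y then true else false.

Lemma RlebP x y : reflect (Rle x y) (Rleb x y).
Proof. by rewrite /Rleb; case: Rle_dec => H; constructor. Qed.

Lemma Rleb_total : total Rleb.
Proof. by move=> x y; apply/orP; case: (Rle_dec x y) => H; [left|right]; apply/RlebP; lra. Qed.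

Lemma Rleb_trans : transitive Rleb.
Proof. by move=> y x z /RlebP H1 /RlebP H2; apply/RlebP; lra. Qed.

Lemma Rleb_refl : reflexive Rleb.
Proof. by move=> x; apply/RlebP; lra. Qed.

(* In the sorted sequence, a value other than [v] at position [f] forces all
   positions on one side of it, at least [f+1] of them, to differ from [v]. *)
Lemma trimmed_eq f (s : seq R) v : size s = (2 * f).+1 ->
  count (fun y => ~~ Reqb y v) s <= f -> trimmed f s = v.
Proof.
move=> size_s count_s; rewrite /trimmed.
set s' := sort Rleb s.
have sorted_s' : sorted Rleb s' by apply: sort_sorted; exact: Rleb_total.
have size_s' : size s' = (2 * f).+1 by rewrite size_sort.
have {count_s} count_s' : count (fun y => ~~ Reqb y v) s' <= f by rewrite count_sort.
have mono i j : i <= j -> j < size s' -> Rle (nth R0 s' i) (nth R0 s' j).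
  move=> le_ij lt_j; apply/RlebP.
  by apply: (sorted_leq_nth Rleb_trans Rleb_refl) => //; rewrite inE; lia.
have neq y : y <> v -> ~~ Reqb y v by rewrite /Reqb; case: Req_EM_T.
have count_all s0 : all (fun y => ~~ Reqb y v) s0 -> count (fun y => ~~ Reqb y v) s0 = size s0.
  by rewrite all_count => /eqP.
case: (Rtotal_order (nth R0 s' f) v) => [lt_v|[//|gt_v]].
  have all_lt : all (fun y => ~~ Reqb y v) (take f.+1 s').
    apply/(all_nthP R0) => j; rewrite size_take_min => lt_j; rewrite nth_take; last lia.
    by apply: neq; have := mono j f ltac:(lia) ltac:(lia); lra.
  move: count_s'; rewrite -(cat_take_drop f.+1 s') count_cat (count_all _ all_lt).
  rewrite size_take_min size_s'; lia.
have all_gt : all (fun y => ~~ Reqb y v) (drop f s').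
  apply/(all_nthP R0) => j; rewrite size_drop => lt_j; rewrite nth_drop.
  by apply: neq; have := mono f (f + j) (leq_addr _ _) ltac:(lia); lra.
move: count_s'; rewrite -(cat_take_drop f s') count_cat (count_all _ all_gt).
rewrite size_drop size_s'; lia.
Qed.

Lemma count_pmap (aT rT : Type) (F : aT -> option rT) (p : pred rT) s :
  count p (pmap F s) = count (fun y => oapp p false (F y)) s.
Proof. by elim: s => //= y s IH; case: (F y) => //= v; rewrite IH. Qed.

Lemma count_enum_card N (p : pred 'I_N) : count p (enum 'I_N) = #|[set l | p l]|.
Proof.
rewrite cardE size_filter /enum_mem -!enumT count_filter; apply: eq_count => l.
by rewrite !inE andbT.
Qed.

Lemma trimmed_vals N f a k (m : memory N) (A : {set 'I_N}) y :
  #|dom m| = (2 * f).+1 -> #|A| <= f ->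
  (forall l v d phi, m l = Some (v, d, phi) -> l \notin A -> Rmult (pow a (k - phi)) v = y) ->
  trimmed f (vals a k m) = y.
Proof.
move=> card_dom card_A regular_y; apply: trimmed_eq.
  rewrite size_pmap count_enum_card -card_dom; apply: eq_card => l.
  by rewrite !inE; case: (m l) => [[[]]|].
rewrite count_pmap count_enum_card; apply: leq_trans card_A; apply: subset_leq_card.
apply/subsetP => l; rewrite inE; case m_l: (m l) => [[[v d] phi]|] //=.
have [//|l_reg] := boolP (l \in A).
by rewrite /Reqb; case: Req_EM_T => // + _; rewrite (regular_y _ _ _ _ m_l l_reg).
Qed.

Section OneStep.
Variable N : nat.
Implicit Types (m : memory N) (l : 'I_N) (K : {set 'I_N}) (rep : 'I_N -> option (R * nat)).

Definition derived rep k m m2 :=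
  forall l e, m2 l = Some e -> m l = Some e \/ exists v t, rep l = Some (v, t) /\ e = (v, t, k).

Lemma append_derived m P rep k : derived rep k m (append m P rep k).
Proof.
move=> l e; rewrite /append; case: (l \in P); last by left.
by case: (rep l) => [[v t]|]; [move=> [<-]; right; exists v, t | left].
Qed.

Lemma restrict_derived rep k m m2 K : derived rep k m m2 -> derived rep k m (restrict m2 K).
Proof. by move=> der l e; rewrite /restrict; case: (l \in K) => //; apply: der. Qed.

Lemma derived_trans rep k m m1 m2 :
  derived rep k m m1 -> derived rep k m1 m2 -> derived rep k m m2.
Proof. by move=> der1 der2 l e /der2 [/der1 //|]; right. Qed.

Lemma Fupd_facts f a k m2 xh' tau' m' :
  Fupd f a k m2 xh' tau' m' -> tau' = Some (maxd m') /\ #|dom m'| = (2 * f).+1.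
Proof. by case=> card_m2 [-> [_ m'_eq]]; rewrite (maxd_eq m'_eq) (dom_eq m'_eq) dom_incr maxd_incr ?card_m2. Qed.

Lemma step_derived f a k Nin rcv xh tau m xh' tau' m' :
  nonsource_step f a k Nin rcv xh tau m xh' tau' m' ->
  exists m2, [/\ derived (reported k Nin rcv) k m m2, m' =1 incr m2 &
    (tau' = None /\ tau = None) \/ Fupd f a k m2 xh' tau' m'].
Proof.
rewrite /nonsource_step; case: tau => [t0|].
  case=> K [_ _ _ upd]; eexists; split; last (right; exact: upd); last by case: upd => [_ [_ []]].
  by apply/restrict_derived/derived_trans; apply: append_derived.
case: ifP => _.
  by case=> m'_eq [-> _]; eexists; split; [apply: append_derived | exact: m'_eq | left].
case=> P [_ _ _ upd]; eexists; split; last (right; exact: upd); last by case: upd => [_ [_ []]].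
exact: append_derived.
Qed.

Lemma step_None f a k Nin rcv xh tau m xh' m' :
  nonsource_step f a k Nin rcv xh tau m xh' None m' ->
  [/\ tau = None, dom m \subset dom m',
      [set l | isSome (reported k Nin rcv l)] \subset dom m' & #|dom m'| <= 2 * f].
Proof.
rewrite /nonsource_step; case: tau => [t0|]; first by case=> K [_ _ _ [_ []]].
set rep := reported k Nin rcv; set J := [set l | isSome (rep l)].
case: ifP => [lt_card|_]; last by case=> P [_ _ _ [_ []]].
case=> m'_eq _.
have dom_m' : dom m' = dom m :|: (J :\: dom m).
  rewrite (dom_eq m'_eq) dom_incr; apply/setP => l; rewrite in_setU !in_dom /append.
  case: ifP => [|_]; last by rewrite orbF.
  by rewrite in_setD !inE => /andP[_]; case: (rep l) => [[]|] //=; rewrite orbT.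
split; rewrite // dom_m'; first exact: subsetUl.
  by apply/subsetP => l l_J; rewrite in_setU in_setD l_J andbT; case: (l \in dom m).
by apply: leq_trans (leq_card_setU _ _) _; rewrite -ltnS.
Qed.

Definition rindex rep l : nat := match rep l with Some (_, t) => t | None => 0 end.

Definition refresh m rep k : memory N :=
  append m [set l in [set l | isSome (rep l)] :&: dom m | rindex rep l < dval m l] rep k.

Definition sel_index m rep l : nat := if l \in dom m then dval m l else rindex rep l.

Definition select m rep k K : memory N := restrict (append m (K :\: dom m) rep k) K.

Lemma nonsource_step_Some f a k Nin rcv xh t0 m xh' tau' m' :
  nonsource_step f a k Nin rcv xh (Some t0) m xh' tau' m' ->
  let rep := reported k Nin rcv in
  let m1 := refresh m rep k in
  let C := dom m1 :|: [set l | isSome (rep l)] in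
  exists2 K : {set 'I_N}, K \subset C /\ #|K| = (2 * f).+1 &
    (forall l l', l \in K -> l' \in C :\: K -> sel_index m1 rep l <= sel_index m1 rep l') /\
    Fupd f a k (select m1 rep k K) xh' tau' m'.
Proof. by case=> K [sub_KC card_K K_least upd]; exists K. Qed.

Lemma refreshE m rep k l :
  refresh m rep k l = m l \/
  exists v r, [/\ rep l = Some (v, r), m l <> None, r < dval m l & refresh m rep k l = Some (v, r, k)].
Proof.
rewrite /refresh /append /rindex !inE; case: (rep l) => [[v r]|] /=; last by left.
case m_l: (m l) => [e|] /=; last by left.
by case: ltnP => [lt_r|_]; [right; exists v, r | left].
Qed.

Lemma dom_refresh m rep k : dom (refresh m rep k) = dom m.
Proof.
apply/setP => l; rewrite !in_dom.
by case: (refreshE m rep k l) => [->|[v [r [_ m_l _ ->]]]] //; case: (m l) m_l.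
Qed.

Lemma dval_refresh m rep k l : dval (refresh m rep k) l <= dval m l.
Proof.
case: (refreshE m rep k l) => [eq_l|[v [r [_ _ lt_r eq_l]]]]; rewrite /dval eq_l //.
exact: ltnW.
Qed.

Lemma dval_refresh_reported m rep k l v r :
  l \in dom m -> rep l = Some (v, r) -> dval (refresh m rep k) l <= r.
Proof.
rewrite in_dom => m_l rep_l; case: (refreshE m rep k l) => [eq_l|[v' [r' [rep_l' _ _ eq_l]]]].
  move: eq_l m_l; rewrite /refresh /append /rindex /dval !inE rep_l /=.
  by case: (m l) => [[[v0 d] phi]|] //=; case: ltnP => // + ->.
by move: rep_l'; rewrite rep_l /dval eq_l => -[_ ->].
Qed.

Lemma maxd_refresh m rep k : maxd (refresh m rep k) <= maxd m.
Proof.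
rewrite maxd_leq; apply/forall_inP => l; rewrite dom_refresh => l_in.
exact: leq_trans (dval_refresh _ _ _ _) (dval_le_maxd l_in).
Qed.

Lemma select_in m rep k K l :
  K \subset dom m :|: [set l | isSome (rep l)] -> l \in K ->
  l \in dom (select m rep k K) /\ dval (select m rep k K) l = sel_index m rep l.
Proof.
move=> sub_KC l_K; rewrite /select in_dom /dval /restrict l_K /append in_setD l_K andbT.
rewrite /sel_index; case: (boolP (l \in dom m)) => l_m /=.
  by move: l_m; rewrite in_dom /dval; case: (m l) => [[[]]|].
have := subsetP sub_KC l l_K; rewrite in_setU (negbTE l_m) inE /rindex.
by case: (rep l) => [[]|].
Qed.

Lemma dom_select m rep k K :
  K \subset dom m :|: [set l | isSome (rep l)] -> dom (select m rep k K) = K.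
Proof.
move=> sub_KC; apply/setP => l; have [l_K|l_K] := boolP (l \in K).
  by rewrite (select_in k sub_KC l_K).1.
by rewrite in_dom /select /restrict (negbTE l_K).
Qed.

Lemma maxd_select m rep k K l :
  let C := dom m :|: [set l | isSome (rep l)] in
  K \subset C -> (forall l l', l \in K -> l' \in C :\: K -> sel_index m rep l <= sel_index m rep l') ->
  l \in C :\: K -> maxd (select m rep k K) <= sel_index m rep l.
Proof.
move=> C sub_KC K_least l_out; rewrite maxd_leq; apply/forall_inP => l'.
rewrite dom_select // => l'_K; rewrite (select_in k sub_KC l'_K).2; exact: K_least.
Qed.

Lemma sel_index_refresh m rep k l X :
  (l \in dom m /\ dval m l <= X) \/ (exists v r, rep l = Some (v, r) /\ r <= X) ->
  l \in dom (refresh m rep k) :|: [set l | isSome (rep l)] /\ sel_index (refresh m rep k) rep l <= X.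
Proof.
rewrite /sel_index dom_refresh; case=> [[l_m le_X]|[v [r [rep_l le_r]]]].
  rewrite in_setU l_m; split=> //; exact: leq_trans (dval_refresh _ _ _ _) le_X.
rewrite in_setU inE rep_l orbT; split=> //; case: ifP => [l_m|_].
  exact: leq_trans (dval_refresh_reported k l_m rep_l) le_r.
by rewrite /rindex rep_l.
Qed.

Lemma step_Some f a k Nin rcv xh t0 m xh' tau' m' :
  nonsource_step f a k Nin rcv xh (Some t0) m xh' tau' m' -> #|dom m| = (2 * f).+1 ->
  [/\ tau' = Some (maxd m'), #|dom m'| = (2 * f).+1, maxd m' <= (maxd m).+1 &
     forall l X,
       (l \in dom m /\ dval m l <= X) \/
       (exists v r, reported k Nin rcv l = Some (v, r) /\ r <= X) ->
       (l \in dom m' /\ dval m' l <= X.+1) \/ maxd m' <= X.+1].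
Proof.
move=> /nonsource_step_Some /=.
set rep := reported k Nin rcv; set m1 := refresh m rep k.
move=> [K [sub_KC card_K] [K_least upd]] card_m.
have [tau'_eq card_m'] := Fupd_facts upd.
case: upd => card_sel [_ [_ m'_eq]].
have maxd_m' : maxd m' = (maxd (select m1 rep k K)).+1.
  by rewrite (maxd_eq m'_eq) maxd_incr ?card_sel.
split=> //.
  rewrite maxd_m' ltnS maxd_leq; apply/forall_inP => l0; rewrite dom_select // => l0_K.
  rewrite (select_in k sub_KC l0_K).2.
  suff [l l_m1 le_l] : exists2 l, l \in dom m1 & sel_index m1 rep l0 <= dval m1 l.
    exact: leq_trans le_l (leq_trans (dval_le_maxd l_m1) (maxd_refresh m rep k)).
  have [l0_m1|l0_m1] := boolP (l0 \in dom m1); first by exists l0; rewrite // /sel_index l0_m1.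
  have /subsetPn [l l_m1 l_K] : ~~ (dom m1 \subset K).
    apply/negP => sub_m1; have : l0 |: dom m1 \subset K by rewrite subUset sub1set l0_K sub_m1.
    by move/subset_leq_card; rewrite cardsU1 l0_m1 dom_refresh card_m card_K; lia.
  exists l => //; move: (K_least l0 l l0_K); rewrite {2}/sel_index l_m1; apply.
  by rewrite in_setD l_K in_setU l_m1.
move=> l X /(sel_index_refresh k) [l_C le_X].
have [l_K|l_K] := boolP (l \in K).
  left; have [l_sel dval_l] := select_in k sub_KC l_K.
  by rewrite (dom_eq m'_eq) dom_incr (dval_eq l m'_eq) dval_incr // dval_l ltnS.
right; rewrite maxd_m' ltnS; apply: leq_trans le_X.
by apply: maxd_select => //; rewrite in_setD l_K.
Qed.

End OneStep.

Definition asbool (P : Prop) : bool := if excluded_middle_informative P then true else false.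

Lemma asboolP (P : Prop) : reflect P (asbool P).
Proof. by rewrite /asbool; case: excluded_middle_informative => H; constructor. Qed.

Section Spread.
Variables (N f : nat) (c : 'I_N -> R) (E : nat -> rel 'I_N) (A : {set 'I_N}) (T : nat).
Hypothesis card_A : #|A| <= f.
Hypothesis robust :
  forall w, strongly_robust (union_nbrs E (w * T) T) (source_set c) (3 * f).+1.

(* Of the [3f+1] in-neighbours outside [C], at most [f] are adversarial. *)
Lemma robust_witness w (C : {set 'I_N}) : C != set0 -> C \subset ~: source_set c ->
  exists2 i, i \in C & exists2 G : {set 'I_N}, (2 * f).+1 <= #|G| &
    forall l, l \in G ->
      [/\ l \notin A, l \notin C, l != i & exists2 t, t < T & E (w * T + t) l i].
Proof.
move=> C_ne C_ns; have [i i_C reach] := robust w C_ne C_ns.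
exists i => //; set U := union_nbrs E (w * T) T i :\: C.
exists (U :\: A).
  have : #|U :&: A| <= #|A| by apply/subset_leq_card/subsetIr.
  by move: reach; rewrite -/U -(cardsID A U); lia.
move=> l; rewrite !in_setD /union_nbrs inE => /andP [l_reg /andP [l_C /andP [l_i /existsP [t edge]]]].
by split=> //; exists t.
Qed.

(* Each window strictly enlarges the set of regular nodes satisfying [P] until
   it contains all of them, so [N] windows suffice. *)
Lemma robust_spread (P : nat -> 'I_N -> Prop) w0 :
  (forall n i, i \notin A -> P n i -> P n.+1 i) ->
  (forall n i, i \notin A -> i \in source_set c -> P n i) ->
  (forall n i (G : {set 'I_N}), i \notin A -> i \notin source_set c -> (2 * f).+1 <= #|G| ->
     (forall l, l \in G ->
        [/\ l \notin A, P n l, l != i & exists2 t, t < T & E ((w0 + n) * T + t) l i]) ->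
     P n.+1 i) ->
  forall i, i \notin A -> P N i.
Proof.
move=> P_mono P_src P_step.
pose S n := [set i | (i \notin A) && asbool (P n i)].
have grow n : n <= #|S n| \/ ~: A \subset S n.
  elim: n => [|n IH]; first by left.
  have S_mono : S n \subset S n.+1.
    apply/subsetP => i; rewrite !inE => /andP [i_reg /asboolP P_i].
    by rewrite i_reg; apply/asboolP; apply: P_mono.
  have [full|not_full] := boolP (~: A \subset S n); first by right; apply: subset_trans S_mono.
  have {}IH : n <= #|S n| by case: IH => // full; rewrite full in not_full.
  set C := ~: A :\: S n.
  have C_ne : C != set0.
    by case/subsetPn: not_full => l l_reg l_S; apply/set0Pn; exists l; rewrite in_setD l_reg l_S.
  have C_ns : C \subset ~: source_set c.
    apply/subsetP => l; rewrite in_setD in_setC => /andP [l_S l_reg]; rewrite in_setC.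
    by apply/negP => l_src; move: l_S; rewrite inE l_reg (introT (asboolP _) (P_src n l l_reg l_src)).
  have [i i_C [G card_G G_props]] := robust_witness (w0 + n) C_ne C_ns.
  have i_ns : i \notin source_set c by rewrite -in_setC; apply: (subsetP C_ns).
  move: i_C; rewrite in_setD in_setC => /andP [i_S i_reg].
  have i_S' : i \in S n.+1.
    rewrite inE i_reg; apply/asboolP; apply: (P_step n i G) => // l /G_props [l_reg l_C l_i edge].
    by split=> //; move: l_C; rewrite in_setD in_setC l_reg andbT negbK inE l_reg => /asboolP.
  left; have : i |: S n \subset S n.+1 by rewrite subUset sub1set i_S' S_mono.
  by move/subset_leq_card; rewrite cardsU1 i_S add1n; apply: leq_trans.
move=> i i_reg; suff : i \in S N by rewrite inE i_reg => /asboolP.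
case: (grow N) => [card_S|]; last by move/subsetP; apply; rewrite in_setC.
have -> : S N = [set: 'I_N] by apply/eqP; rewrite eqEcard subsetT cardsT card_ord.
by rewrite inE.
Qed.

End Spread.

Lemma iter_state (a : R) (x : nat -> R) : (forall k, x k.+1 = Rmult a (x k)) ->
  forall p n, x (n + p) = Rmult (pow a n) (x p).
Proof. by move=> x_next p; elim=> [|n IH] /=; rewrite ?Rmult_1_l // x_next IH Rmult_assoc. Qed.

Lemma reported_some N k Nin (rcv : 'I_N -> msg) l v t :
  reported k Nin rcv l = Some (v, t) -> [/\ t <= k, l \in Nin & rcv l = Some (v, Some t)].
Proof.
rewrite /reported; case: ifP => // l_in; case: (rcv l) => // [[w [s|]]] //.
by case: ifP => // le_s [<- <-].
Qed.

Section Execution.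
Variables (N f : nat) (a : R) (c : 'I_N -> R) (E : nat -> rel 'I_N) (A : {set 'I_N})
  (adv : nat -> 'I_N -> 'I_N -> msg) (x : nat -> R) (xh : nat -> 'I_N -> R)
  (tau : nat -> 'I_N -> option nat) (mem : nat -> 'I_N -> memory N).
Hypothesis card_A : #|A| <= f.
Hypothesis x_next : forall k, x k.+1 = Rmult a (x k).
Hypothesis source_exact : forall i, i \notin A -> i \in source_set c -> forall k,
  tau k i = Some 0 /\ xh k.+1 i = x k.+1.
Hypothesis nonsource_run : forall i, i \notin A -> i \notin source_set c ->
  tau 0 i = None /\ (forall l, mem 0 i l = None) /\
  forall k, nonsource_step f a k (nbrs E k i)
     (fun l => if l \in A then adv k l i else Some (xh k l, tau k l))
     (xh k i) (tau k i) (mem k i) (xh k.+1 i) (tau k.+1 i) (mem k.+1 i).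

Definition rep k i := reported k (nbrs E k i)
  (fun l => if l \in A then adv k l i else Some (xh k l, tau k l)).

Lemma rep_some k i l v t : rep k i l = Some (v, t) ->
  t <= k /\ (l \notin A -> xh k l = v /\ tau k l = Some t).
Proof.
case/reported_some => le_t _ sent; split=> // l_reg.
by move: sent; rewrite (negbTE l_reg) => -[-> ->].
Qed.

(* An entry stored at time [k] from a regular sender [l] holds the estimate [l]
   had at the reception time [phi], with [l]'s index then aged by [k - phi]. *)
Definition sound k (m : memory N) :=
  (forall l, dval m l <= k) /\
  (forall l v d phi, m l = Some (v, d, phi) -> l \notin A ->
     [/\ phi <= k, v = xh phi l & exists2 t, tau phi l = Some t & d = t + (k - phi)]).

Lemma sound_derived k i m m2 : sound k m -> derived (rep k i) k m m2 -> sound k m2.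
Proof.
move=> [dval_m entry_m] der; split.
  move=> l; rewrite /dval; case m2_l: (m2 l) => [[[v d] phi]|] //.
  case: (der l _ m2_l) => [m_l|[v' [t [rep_l [_ -> _]]]]]; last by case: (rep_some rep_l).
  by have := dval_m l; rewrite /dval m_l.
move=> l v d phi m2_l l_reg; case: (der l _ m2_l) => [m_l|[v' [t [rep_l [-> -> ->]]]]].
  exact: entry_m m_l l_reg.
have [_ /(_ l_reg) [-> tau_l]] := rep_some rep_l.
by split=> //; exists t; rewrite ?subnn ?addn0.
Qed.

Lemma sound_incr k m m' : sound k m -> m' =1 incr m -> sound k.+1 m'.
Proof.
move=> [dval_m entry_m] m'_eq; split.
  move=> l; rewrite (dval_eq l m'_eq) /dval /incr; have := dval_m l; rewrite /dval.
  by case: (m l) => [[[v d] p]|].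
move=> l v d phi; rewrite m'_eq /incr; case m_l: (m l) => [[[v0 d0] p0]|] //= [<- <- <-] l_reg.
have [le_p -> [t tau_l ->]] := entry_m _ _ _ _ m_l l_reg.
by split; [lia | | exists t; rewrite // subSn //; lia].
Qed.

Lemma sound_mem i : i \notin A -> i \notin source_set c -> forall k,
  sound k (mem k i) /\ (forall t, tau k i = Some t -> t <= k).
Proof.
move=> i_reg i_ns; have [tau0 [mem0 step]] := nonsource_run i_reg i_ns.
elim=> [|k [sound_k _]].
  by split; [split=> [l|l v d phi]; rewrite /dval mem0 | rewrite tau0].
have [m2 [der m'_eq upd]] := step_derived (step k).
have sound_m2 : sound k m2 by apply: (sound_derived (i := i) sound_k).
split; first exact: sound_incr sound_m2 m'_eq.
move=> t; case: upd => [[-> _] //|[_ [-> _]]] [<-].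
by rewrite ltnS maxd_leq; apply/forall_inP => l _; apply: sound_m2.1.
Qed.

Lemma index_le_time i k t : i \notin A -> tau k i = Some t -> t <= k.
Proof.
move=> i_reg tau_i; have [i_src|i_ns] := boolP (i \in source_set c).
  by move: tau_i; rewrite (source_exact i_reg i_src k).1 => -[<-].
exact: (sound_mem i_reg i_ns k).2.
Qed.

(* Every regular entry of the filtered list was sent with an index below its
   time, hence is exact by induction; only the at most [f] adversarial values
   can be wrong, and trimming discards them. *)
Lemma estimate_exact k i t : i \notin A -> tau k i = Some t -> t < k -> xh k i = x k.
Proof.
elim/ltn_ind: k i t => -[//|k] IH i t i_reg tau_i lt_t.
have [i_src|i_ns] := boolP (i \in source_set c); first exact: (source_exact i_reg i_src k).2.
have [_ [_ step]] := nonsource_run i_reg i_ns.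
have [m2 [der _ [[tau_none _]|[card_m2 [tau_eq [xh_eq _]]]]]] := step_derived (step k).
  by rewrite tau_none in tau_i.
have [_ entry_m2] := sound_derived (i := i) (sound_mem i_reg i_ns k).1 der.
move: tau_i lt_t; rewrite tau_eq => -[<-]; rewrite ltnS => lt_maxd.
rewrite xh_eq x_next; congr Rmult; apply: trimmed_vals card_m2 card_A _.
move=> l v d phi m2_l l_reg; have [le_phi -> [s tau_l d_eq]] := entry_m2 _ _ _ _ m2_l l_reg.
have le_d : d <= maxd m2 by have := @dval_le_maxd _ m2 l; rewrite in_dom /dval m2_l; apply.
have exact_l : xh phi l = x phi by apply: (IH phi _ l s) => //; lia.
by rewrite exact_l -(iter_state x_next) subnK.
Qed.

Lemma index_next i k : i \notin A -> isSome (tau k i) -> isSome (tau k.+1 i).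
Proof.
move=> i_reg some_k; have [i_src|i_ns] := boolP (i \in source_set c).
  by rewrite (source_exact i_reg i_src k.+1).1.
have [_ [_ step]] := nonsource_run i_reg i_ns.
have [m2 [_ _ [[_ tau_none]|/Fupd_facts [-> _]]]] := step_derived (step k) => //.
by rewrite tau_none in some_k.
Qed.

Lemma index_persist i k k' : i \notin A -> k <= k' -> isSome (tau k i) -> isSome (tau k' i).
Proof.
move=> i_reg /subnKC <-; elim: (k' - k) => [|j IH] some_k; first by rewrite addn0.
by rewrite addnS; apply: index_next => //; apply: IH.
Qed.

Lemma index_state i k t : i \notin A -> i \notin source_set c -> tau k i = Some t ->
  t = maxd (mem k i) /\ #|dom (mem k i)| = (2 * f).+1.
Proof.
move=> i_reg i_ns; have [tau0 [_ step]] := nonsource_run i_reg i_ns.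
case: k => [|k]; first by rewrite tau0.
have [m2 [_ _ [[-> _] //|/Fupd_facts [-> card_m]]]] := step_derived (step k).
by move=> [<-].
Qed.

Lemma step_at_index i k t : i \notin A -> i \notin source_set c -> tau k i = Some t ->
  [/\ maxd (mem k.+1 i) <= (maxd (mem k i)).+1 &
     forall l X,
       (l \in dom (mem k i) /\ dval (mem k i) l <= X) \/
       (exists v r, rep k i l = Some (v, r) /\ r <= X) ->
       (l \in dom (mem k.+1 i) /\ dval (mem k.+1 i) l <= X.+1) \/ maxd (mem k.+1 i) <= X.+1].
Proof.
move=> i_reg i_ns tau_i; have [_ [_ step]] := nonsource_run i_reg i_ns.
have [_ card_m] := index_state i_reg i_ns tau_i.
by move: (step k); rewrite tau_i => /step_Some /(_ card_m) [].
Qed.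

Lemma maxd_grow i k j : i \notin A -> i \notin source_set c -> isSome (tau k i) ->
  maxd (mem (k + j) i) <= maxd (mem k i) + j.
Proof.
move=> i_reg i_ns some_k; elim: j => [|j IH]; first by rewrite !addn0.
case tau_i: (tau (k + j) i) (index_persist i_reg (leq_addr j k) some_k) => [t|] // _.
have [grow _] := step_at_index i_reg i_ns tau_i.
by rewrite !addnS; apply: leq_trans grow _; rewrite ltnS.
Qed.

Lemma propagate i s l X : i \notin A -> i \notin source_set c -> isSome (tau s i) ->
  (l \in dom (mem s i) /\ dval (mem s i) l <= X) \/
  (exists v r, rep s i l = Some (v, r) /\ r <= X) ->
  forall j, (l \in dom (mem (s + j).+1 i) /\ dval (mem (s + j).+1 i) l <= X + j.+1) \/
            maxd (mem (s + j).+1 i) <= X + j.+1.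
Proof.
move=> i_reg i_ns some_s known; elim=> [|j IH].
  case tau_s: (tau s i) some_s => [t|] // _.
  by have [_ carry] := step_at_index i_reg i_ns tau_s; rewrite addn0 addn1; apply: carry.
have := index_persist i_reg (leq_addr j.+1 s) some_s; rewrite addnS.
case tau_i: (tau (s + j).+1 i) => [t|] // _.
have [grow carry] := step_at_index i_reg i_ns tau_i.
rewrite addnS; case: IH => [stored|small].
  by have := carry l _ (or_introl stored); rewrite !addnS.
by right; apply: leq_trans grow _; rewrite ltnS.
Qed.

Lemma dom_grows_unindexed i k k' : i \notin A -> i \notin source_set c -> k <= k' ->
  tau k' i = None -> dom (mem k i) \subset dom (mem k' i).
Proof.
move=> i_reg i_ns /subnKC <-; have [_ [_ step]] := nonsource_run i_reg i_ns.
elim: (k' - k) => [|j IH]; first by rewrite addn0.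
rewrite addnS => tau_none; move: (step (k + j)); rewrite tau_none => /step_None [tau_prev sub _ _].
exact: subset_trans (IH tau_prev) sub.
Qed.

Lemma card_dom_unindexed i k : i \notin A -> i \notin source_set c ->
  tau k i = None -> #|dom (mem k i)| <= 2 * f.
Proof.
move=> i_reg i_ns; have [_ [mem0 step]] := nonsource_run i_reg i_ns.
case: k => [_|k tau_none]; last by move: (step k); rewrite tau_none => /step_None [].
by rewrite (_ : dom _ = set0) ?cards0 //; apply/setP => l; rewrite in_dom mem0 inE.
Qed.

Lemma rep_regular k i l r : l \notin A -> l != i -> E k l i -> tau k l = Some r ->
  rep k i l = Some (xh k l, r).
Proof.
move=> l_reg l_i edge tau_l; rewrite /rep /reported inE l_i edge (negbTE l_reg) tau_l.
by rewrite (index_le_time l_reg tau_l).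
Qed.

Lemma reported_stored_unindexed i s k l v r : i \notin A -> i \notin source_set c ->
  s < k -> tau k i = None -> rep s i l = Some (v, r) -> l \in dom (mem k i).
Proof.
move=> i_reg i_ns lt_s tau_k rep_l; have [_ [_ step]] := nonsource_run i_reg i_ns.
case tau_s: (tau s.+1 i) => [t|].
  by have := index_persist i_reg lt_s; rewrite tau_s tau_k => /(_ isT).
move: (step s); rewrite tau_s => /step_None [_ _ /subsetP heard _].
apply: (subsetP (dom_grows_unindexed i_reg i_ns lt_s tau_k)); apply: heard.
by move: rep_l; rewrite inE /rep => ->.
Qed.


Variable T : nat.
Hypothesis T_gt0 : 0 < T.
Hypothesis robust :
  forall w, strongly_robust (union_nbrs E (w * T) T) (source_set c) (3 * f).+1.

(* A node still without index keeps every reporter in its list, so hearing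
   [2f+1] indexed regular nodes during a window would overflow it. *)
Lemma eventually_indexed i : i \notin A -> isSome (tau (N * T) i).
Proof.
apply: (robust_spread card_A robust (P := fun n i => isSome (tau (n * T) i)) (w0 := 0)).
- by move=> n j j_reg; apply: index_persist => //; rewrite leq_mul2r leqnSn orbT.
- by move=> n j j_reg j_src; rewrite (source_exact j_reg j_src _).1.
move=> n j G j_reg j_ns card_G G_props.
case tau_j: (tau (n.+1 * T) j) => [t|] //; exfalso.
have : G \subset dom (mem (n.+1 * T) j).
  apply/subsetP => l /G_props [l_reg some_l l_j [t lt_t]]; rewrite add0n => edge.
  case tau_l: (tau (n * T + t) l) (index_persist l_reg (leq_addr t (n * T)) some_l) => [r|] // _.
  apply: (reported_stored_unindexed j_reg j_ns _ tau_j (rep_regular l_reg l_j edge tau_l)).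
  by rewrite mulSnr ltn_add2l.
by move/subset_leq_card; have := card_dom_unindexed j_reg j_ns tau_j; lia.
Qed.

Definition lags_from k0 b q :=
  forall k, k0 <= k -> exists2 t, tau k q = Some t & t + k0 <= b + k.

Lemma lags_from_shift k0 b q : lags_from k0 b q -> lags_from (k0 + T) (b + T) q.
Proof. by move=> lag k le_k; have [|t tau_q le_t] := lag k; [lia | exists t => //; lia]. Qed.

Lemma lags_step i k0 b (G : {set 'I_N}) : i \notin A -> i \notin source_set c ->
  isSome (tau k0 i) -> (2 * f).+1 <= #|G| ->
  (forall l, l \in G -> [/\ l \notin A, lags_from k0 b l, l != i &
                            exists2 t, t < T & E (k0 + t) l i]) ->
  lags_from (k0 + T) (b + T) i.
Proof.
move=> i_reg i_ns some_k0 card_G G_props.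
have some_T := index_persist i_reg (leq_addr T k0) some_k0.
have maxd_T : maxd (mem (k0 + T) i) <= b + T.
  case tau_T: (tau (k0 + T) i) some_T => [t0|] // _.
  have [_ card_T] := index_state i_reg i_ns tau_T.
  apply: (maxd_le_cover (G := G)); first by rewrite card_T.
  move=> l /G_props [l_reg lag_l l_i [t lt_t edge]].
  have [r tau_l le_r] := lag_l (k0 + t) (leq_addr _ _).
  have rep_l := rep_regular l_reg l_i edge tau_l.
  have := propagate i_reg i_ns (index_persist i_reg (leq_addr t k0) some_k0)
            (or_intror (ex_intro _ _ (ex_intro _ _ (conj rep_l (leqnn r))))) (T - t.+1).
  have -> : (k0 + t + (T - t.+1)).+1 = k0 + T by lia.
  by case=> [[l_in le_d]|le_maxd]; [left; split=> //; lia | right; lia].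
move=> k le_k; case tau_k: (tau k i) (index_persist i_reg le_k some_T) => [t|] // _.
exists t => //; have [-> _] := index_state i_reg i_ns tau_k.
by have := maxd_grow (k - (k0 + T)) i_reg i_ns some_T; rewrite subnKC //; lia.
Qed.

Lemma eventually_lagging w0 i : N <= w0 -> i \notin A -> lags_from ((w0 + N) * T) (N * T) i.
Proof.
move=> le_w0.
apply: (robust_spread card_A robust (P := fun n q => lags_from ((w0 + n) * T) (n * T) q) (w0 := w0)).
- by move=> n q _; rewrite addnS !mulSnr; apply: lags_from_shift.
- by move=> n q q_reg q_src k le_k; exists 0; [exact: (source_exact q_reg q_src k).1 | lia].
move=> n q G q_reg q_ns card_G G_props; rewrite addnS !mulSnr.
apply: (lags_step q_reg q_ns _ card_G G_props).
apply: (index_persist q_reg _ (eventually_indexed q_reg)).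
by rewrite leq_mul2r (leq_trans le_w0 (leq_addr _ _)) orbT.
Qed.

Lemma eventually_exact : exists K, forall k, K <= k -> forall i, i \notin A -> xh k i = x k.
Proof.
exists ((N + N) * T) => k le_k i i_reg.
have NT_gt0 : 0 < N * T by rewrite muln_gt0 T_gt0 (leq_ltn_trans (leq0n i) (ltn_ord i)).
have [t tau_i lag] := eventually_lagging (leqnn N) i_reg le_k.
by apply: estimate_exact i_reg tau_i _; lia.
Qed.

End Execution.

Theorem theorem2 (N f : nat) (a : R) (c : 'I_N -> R) (E : nat -> rel 'I_N) :
  jointly_strongly_robust E (source_set c) (3 * f).+1 ->
  forall rho : R, Rlt R0 rho /\ Rlt rho R1 ->
  exists gain : 'I_N -> R,
    forall (A : {set 'I_N}), #|A| <= f ->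
    forall (adv : nat -> 'I_N -> 'I_N -> msg) (x : nat -> R)
           (xh : nat -> 'I_N -> R) (tau : nat -> 'I_N -> option nat)
           (mem : nat -> 'I_N -> memory N),
      run f a c gain E A adv x xh tau mem ->
      exists (cst : R) (K : nat),
        Rle R0 cst /\
        forall k, K <= k -> forall i, i \notin A ->
          Rle (Rabs (Rminus (xh k i) (x k))) (Rmult cst (pow rho k)).
Proof.
move=> [T T_gt0 robust] rho _.
exists (fun i => if Req_EM_T (c i) R0 then R0 else Rdiv a (c i)).
move=> A card_A adv x xh tau mem [x_next [source_step nonsource_run]].
have source_exact i : i \notin A -> i \in source_set c -> forall k,
    tau k i = Some 0 /\ xh k.+1 i = x k.+1.
  move=> i_reg i_src k; have [tau_i xh_next] := source_step i i_reg i_src k; split=> //.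
  by rewrite xh_next x_next /=; move: i_src; rewrite inE; case: Req_dec_T => //= c_i _; field.
have [K exact] := eventually_exact card_A x_next source_exact nonsource_run T_gt0 robust.
exists R0, K; split=> [|k le_k i i_reg]; first lra.
rewrite exact // Rminus_diag_eq // Rabs_R0 Rmult_0_l; lra.
Qed.
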